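(* Let $u\in\mathbb{R}^d$ be a utility vector, $\mathrm{util}(x)=u^Tx$, let $\epsilon\in[0,1]$, and let $A$ be a finite set of pairs $(y,z)$ of tuples in $\mathbb{R}^d$ with $\mathrm{util}(y)<\mathrm{util}(z)$ for each pair. Consider a tuple $x\in\mathbb{R}^d$ such that $\mathrm{util}(x)>\mathrm{util}(z)$ and $\mathrm{util}(x)-\mathrm{util}(z)>\epsilon\,\mathrm{util}(x)$ for every $(y,z)\in A$. Then there exists a vector $v\in\mathbb{R}^d$ such that, for all $(y,z)\in A$, $$v^T(z-y)\ge 1,\qquad v^T(x-z)\ge 1,\qquad v^T((1-\epsilon)x-z)\ge 1.$$ *)

From mathcomp Require Import all_boot all_order all_algebra.
Set Implicit Arguments. Unset Strict Implicit. Unset Printing Implicit Defensive.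
Import Order.TTheory GRing.Theory Num.Theory.
Local Open Scope ring_scope.

Definition dotv (R : realFieldType) (d : nat) (v x : 'rV[R]_d) : R :=
  \sum_(i < d) v 0 i * x 0 i.

Definition util (R : realFieldType) (d : nat) (u x : 'rV[R]_d) : R := dotv u x.

(** Every difference the conclusion asks about has positive utility: this is
   [util y < util z], [util z < util x] and [eps * util x < util x - util z]
   read through the linearity of [util u].  Finitely many vectors on which
   [u] is positive are all sent to values [>= 1] by a large enough multiple
   [c *: u]; the sum of the inverses of those positive values will do. *)
From mathcomp Require Import all_boot all_order all_algebra.
Import Order.TTheory GRing.Theory Num.Theory.
Local Open Scope ring_scope.

Section Dot.

Variables (R : realFieldType) (d : nat).
Implicit Types (c : R) (v w : 'rV[R]_d).

Lemma dotvZl c v w : dotv (c *: v) w = c * dotv v w.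
Proof. by rewrite /dotv mulr_sumr; apply: eq_bigr => i _; rewrite mxE mulrA. Qed.

Lemma dotvZr c v w : dotv v (c *: w) = c * dotv v w.
Proof. by rewrite /dotv mulr_sumr; apply: eq_bigr => i _; rewrite mxE mulrCA. Qed.

Lemma dotvBr v (w1 w2 : 'rV[R]_d) : dotv v (w1 - w2) = dotv v w1 - dotv v w2.
Proof. by rewrite /dotv -sumrB; apply: eq_bigr => i _; rewrite !mxE mulrBr. Qed.

End Dot.

Lemma exists_scale_ge1 (R : realFieldType) (s : seq R) :
  {in s, forall t, 0 < t} -> exists c : R, {in s, forall t, 1 <= c * t}.
Proof.
move=> s_gt0; exists (\sum_(t <- s) t^-1) => t ts.
have t_gt0 := s_gt0 t ts.
rewrite -ler_pdivrMr // div1r (big_rem t ts) /= lerDl big_seq.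
by apply: sumr_ge0 => r /mem_rem/s_gt0/ltW; rewrite invr_ge0.
Qed.

Lemma exists_dotv_ge1 (R : realFieldType) (d : nat) (u : 'rV[R]_d)
    (ws : seq 'rV[R]_d) :
  {in ws, forall w, 0 < util u w} ->
  exists v : 'rV[R]_d, {in ws, forall w, 1 <= dotv v w}.
Proof.
move=> ws_gt0.
have [|c c_ge1] := @exists_scale_ge1 R [seq util u w | w <- ws].
  by move=> _ /mapP[w wws ->]; exact: ws_gt0.
by exists (c *: u) => w wws; rewrite dotvZl; exact: c_ge1 (map_f _ wws).
Qed.

Lemma util_scale_subr (R : realFieldType) (d : nat) (u x z : 'rV[R]_d)
    (eps : R) :
  util u ((1 - eps) *: x - z) = util u x - util u z - eps * util u x.
Proof. by rewrite /util dotvBr dotvZr mulrBl mul1r addrAC. Qed.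

Theorem proposition6p1 (R : realFieldType) (d : nat) (u : 'rV[R]_d) (eps : R)
  (A : seq ('rV[R]_d * 'rV[R]_d)) (x : 'rV[R]_d) :
  0 <= eps -> eps <= 1 ->
  (forall p, p \in A -> util u p.1 < util u p.2) ->
  (forall p, p \in A -> util u x > util u p.2 /\
                        util u x - util u p.2 > eps * util u x) ->
  exists v : 'rV[R]_d, forall p, p \in A ->
    [/\ 1 <= dotv v (p.2 - p.1),
        1 <= dotv v (x - p.2)
      & 1 <= dotv v ((1 - eps) *: x - p.2)].
Proof.
move=> _ _ lt_yz lt_zx.
pose ws := [seq p.2 - p.1 | p <- A] ++ [seq x - p.2 | p <- A]
           ++ [seq (1 - eps) *: x - p.2 | p <- A].
have [|v v_ge1] := @exists_dotv_ge1 R d u ws.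
  move=> w; rewrite !mem_cat => /or3P[] /mapP[p pA ->];
    have [zx ezx] := lt_zx p pA.
  - by rewrite /util dotvBr subr_gt0 lt_yz.
  - by rewrite /util dotvBr subr_gt0.
  - by rewrite util_scale_subr subr_gt0.
exists v => p pA; split; apply: v_ge1; rewrite !mem_cat; apply/or3P.
- by apply: Or31; apply/mapP; exists p.
- by apply: Or32; apply/mapP; exists p.
- by apply: Or33; apply/mapP; exists p.
Qed.
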